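(* Let $\mathcal{S},\mathcal{A}$ be finite, $\gamma\in(0,1)$, and consider an MDP with $(\tilde r(s,a),\tilde s')\sim P(\cdot,\cdot\mid s,a)$, $\tilde r(s,a)\in[0,1]$ almost surely and with bounded density. Let $\rho$ be a coherent risk measure and $d$ a probability distribution on $\mathcal{S}$ with $0<d(s)\le1$. Let $\pi_\theta$ be the softmax policy $\pi_\theta(a\mid s)=\exp(\theta(s,a))/\sum_b\exp(\theta(s,b))$, and define $\mathcal{L}_t(\theta)=\sum_s d(s)\sum_a\pi_\theta(a\mid s)Q^{\pi_{\theta_t}}(s,a)$ and $g_t(\theta_t)=\nabla_\theta\mathcal{L}_t(\theta)|_{\theta=\theta_t}$, where the iterates satisfy $\theta_{t+1}=\theta_t+\eta\,g_t(\theta_t)$ with $\eta\le(1-\gamma)/5$. Then $g_t(\theta_t)\to0$ as $t\to\infty$.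
   Context: A coherent risk measure $\rho$ satisfies concavity, monotonicity ($\tilde x\le\tilde y\Rightarrow\rho(\tilde x)\le\rho(\tilde y)$), translation invariance $\rho(\tilde x+c)=\rho(\tilde x)+c$, and positive homogeneity $\rho(\lambda\tilde x)=\lambda\rho(\tilde x)$ for $\lambda\ge0$. For a stochastic policy $\pi$, $Q^\pi$ is the unique fixed point of $(\mathcal{T}^\pi Q)(s,a)=\rho\big(\tilde r(s,a)+\gamma\sum_{a'}\pi(a'\mid\tilde s')Q(\tilde s',a')\big)$, $\rho$ taken over the joint law of $(\tilde r(s,a),\tilde s')$. *)

From HB Require Import structures.
From mathcomp Require Import all_boot all_order all_algebra.
From mathcomp Require Import all_classical all_reals all_analysis.
Set Implicit Arguments. Unset Strict Implicit. Unset Printing Implicit Defensive.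
Import Order.TTheory GRing.Theory Num.Theory.
Local Open Scope classical_set_scope.
Local Open Scope ring_scope.

Section Defs.
Context (R : realType) (dO : measure_display) (Omega : measurableType dO)
        (Pr : probability Omega R).

Definition Linf (X : Omega -> R) : Prop :=
  measurable_fun setT X /\ exists M : R, {ae Pr, forall w, `|X w| <= M}.

Definition coherent (rho : (Omega -> R) -> R) : Prop :=
  [/\ (forall (X Y : Omega -> R) (l : R), Linf X -> Linf Y -> 0 <= l <= 1 ->
         l * rho X + (1 - l) * rho Y <= rho (fun w => l * X w + (1 - l) * Y w)),
      (forall X Y : Omega -> R, Linf X -> Linf Y -> (forall w, X w <= Y w) ->
         rho X <= rho Y),
      (forall (X : Omega -> R) (c : R), Linf X -> rho (fun w => X w + c) = rho X + c) &
      (forall (X : Omega -> R) (l : R), Linf X -> 0 <= l ->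
         rho (fun w => l * X w) = l * rho X)].

Definition law_invariant (rho : (Omega -> R) -> R) : Prop :=
  forall X Y : Omega -> R, Linf X -> Linf Y ->
    (forall B : set R, measurable B -> Pr (X @^-1` B) = Pr (Y @^-1` B)) ->
    rho X = rho Y.
End Defs.

Section MDP.
Context (R : realType) (dO : measure_display) (Omega : measurableType dO)
        (S A : finType).

Definition bellman (rho : (Omega -> R) -> R) (gamma : R)
  (r : S -> A -> Omega -> R) (s' : S -> A -> Omega -> S)
  (pi : S -> A -> R) (Q : S -> A -> R) (s : S) (a : A) : R :=
  rho (fun w => r s a w + gamma * \sum_(a' : A) pi (s' s a w) a' * Q (s' s a w) a').

Definition softmax (theta : S -> A -> R) (s : S) (a : A) : R :=
  expR (theta s a) / \sum_(b : A) expR (theta s b).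

Definition surrogate (d : S -> R) (Qt : S -> A -> R) (theta : S -> A -> R) : R :=
  \sum_(s : S) d s * \sum_(a : A) softmax theta s a * Qt s a.

Definition shift (theta : S -> A -> R) (s : S) (a : A) (h : R) : S -> A -> R :=
  fun s1 a1 => if (s1 == s) && (a1 == a) then theta s1 a1 + h else theta s1 a1.

Definition grad (f : (S -> A -> R) -> R) (theta : S -> A -> R) (s : S) (a : A) : R :=
  derive1 (fun h : R => f (shift theta s a h)) 0.
End MDP.

(* Write [Q_t] for the fixed point of the Bellman operator of the policy
   [pi_t = softmax theta_t] and [V_t s = sum_a pi_t(a|s) Q_t(s,a)]; the gradient of
   the surrogate is [g_t(s,a) = d s * pi_t(a|s) * (Q_t(s,a) - V_t s)].
   Since rho is monotone, translation invariant and law invariant and rewards lie in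
   [0,1] almost surely, [Q_t] takes values in [0, 1/(1-gamma)], so a step of size
   [eta <= (1-gamma)/5] moves every logit by at most 1/5. On that range
   [exp y - 1 >= 4/5 * y] whenever y has the sign of [Q_t - V_t], and the softmax
   normaliser grows by a factor at most e; hence the step raises the one-step average
   [sum_a pi_(t+1)(a|s) Q_t(s,a)] above [V_t s] by at least [4 eta/(5e) * g_t(s,a)^2].
   Policy improvement then gives [Q_t <= Q_(t+1)], so the objective
   [sum_s d s * V_t s] is nondecreasing, bounded by 1/(1-gamma), and its increments
   dominate [d s * 4 eta/(5e) * g_t(s,a)^2], which forces [g_t -> 0]. *)

From Pilot Require Import Defs.
From HB Require Import structures.
From mathcomp Require Import all_boot all_order all_algebra.
From mathcomp Require Import all_classical all_reals all_analysis.
From mathcomp Require Import ring lra.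
Import Order.TTheory GRing.Theory Num.Theory numFieldNormedType.Exports.
Local Open Scope classical_set_scope.
Local Open Scope ring_scope.

Section Policies.
Context {R : realType} {S A : finType}.

Definition stochastic (pi : S -> A -> R) : Prop :=
  (forall s a, 0 <= pi s a) /\ (forall s, \sum_a pi s a = 1).

Definition state_value (pi Q : S -> A -> R) (s : S) : R :=
  \sum_a pi s a * Q s a.

Lemma state_value_bounds { pi Q : S -> A -> R } { m M : R } { s : S } :
  stochastic pi -> (forall a, m <= Q s a <= M) ->
  m <= state_value pi Q s <= M.
Proof.
move=> [pi_ge0 pi_sum1] QmM.
have -> : m = \sum_a pi s a * m by rewrite -mulr_suml pi_sum1 mul1r.
have -> : M = \sum_a pi s a * M by rewrite -mulr_suml pi_sum1 mul1r.
apply/andP; split; apply: ler_sum => a _; apply: ler_wpM2l => //;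
  by case/andP: (QmM a).
Qed.

Lemma sum_expR_gt0 (a0 : A) (f : A -> R) : 0 < \sum_b expR (f b).
Proof.
rewrite (bigD1 a0) //=; apply: ltr_pwDl; first exact: expR_gt0.
by apply: sumr_ge0 => b _; exact: expR_ge0.
Qed.

Lemma softmax_stochastic (a0 : A) (th : S -> A -> R) : stochastic (softmax th).
Proof.
split=> [s a|s].
  by apply: divr_ge0; [exact: expR_ge0 | exact: ltW (sum_expR_gt0 a0 _)].
by rewrite /softmax -mulr_suml divff // lt0r_neq0 // (sum_expR_gt0 a0).
Qed.

End Policies.

Section SoftmaxGradient.
Context {R : realType} {S A : finType}.

Lemma is_derive_sumT (I : finType) (F : I -> R -> R) (x : R) (dF : I -> R) :
  (forall i, is_derive x 1 (F i) (dF i)) ->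
  is_derive x 1 (fun h => \sum_i F i h) (\sum_i dF i).
Proof.
move=> dF_F; rewrite -fct_sumE.
by elim/big_ind2 : _ => // *; [exact: is_derive_cst | exact: is_deriveD].
Qed.

Lemma is_derive_expR_affine (t w : R) :
  is_derive (0 : R) 1 (fun h : R => expR (t + w * h)) (expR t * w).
Proof.
have lin : is_derive (0 : R) 1 (fun h : R => t + w * h) w.
  apply: is_derive_eq (is_deriveD (is_derive_cst t _ _)
                       (is_deriveZ w (is_derive_id (0 : R) (1 : R)))) _.
  by rewrite add0r scaler1.
have := @is_derive1_comp R expR (fun h => t + w * h) 0 _ _ (is_derive_expR _) lin.
by rewrite mulr0 addr0.
Qed.

Lemma is_derive_state_value_softmax (a0 : A) (th w Q : S -> A -> R) (s : S) :
  is_derive (0 : R) 1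
    (fun h => state_value (softmax (fun s1 b => th s1 b + w s1 b * h)) Q s)
    (\sum_b softmax th s b * w s b * (Q s b - state_value (softmax th) Q s)).
Proof.
pose E b h := expR (th s b + w s b * h).
pose Z h := \sum_b E b h.
pose N h := \sum_b Q s b * E b h.
have E0 b : E b 0 = expR (th s b) by rewrite /E mulr0 addr0.
have ZE : Z 0 = \sum_b expR (th s b) by apply: eq_bigr => b _; exact: E0.
have NE : N 0 = \sum_b Q s b * expR (th s b) by apply: eq_bigr => b _; rewrite E0.
have Z0 : 0 < Z 0 by rewrite ZE; exact: sum_expR_gt0.
have dZ : is_derive (0 : R) 1 Z (\sum_b expR (th s b) * w s b).
  by apply: is_derive_sumT => b; exact: is_derive_expR_affine.
have dN : is_derive (0 : R) 1 N (\sum_b Q s b * (expR (th s b) * w s b)).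
  by apply: is_derive_sumT => b; exact: is_deriveZ (is_derive_expR_affine _ _).
have -> : (fun h => state_value (softmax (fun s1 b => th s1 b + w s1 b * h)) Q s)
          = (fun h => N h * (Z h)^-1).
  apply: boolp.funext => h; rewrite /N /state_value /softmax mulr_suml.
  by apply: eq_bigr => b _; rewrite mulrAC [_ * Q s b]mulrC.
apply: is_derive_eq (is_deriveM dN (is_deriveV (lt0r_neq0 Z0) dZ)) _.
have V0 : state_value (softmax th) Q s = N 0 / Z 0.
  rewrite NE ZE /state_value /softmax mulr_suml.
  by apply: eq_bigr => b _; rewrite mulrAC [_ * Q s b]mulrC.
rewrite V0 scalerA !scaler_sumr -big_split /=; apply: eq_bigr => b _.
rewrite /softmax -ZE /GRing.scale /=.
by field; exact: lt0r_neq0.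
Qed.

Lemma shiftE (th : S -> A -> R) (s : S) (a : A) (h : R) :
  Defs.shift th s a h = fun s1 b => th s1 b + ((s1 == s) && (b == a))%:R * h.
Proof.
apply: boolp.funext => s1; apply: boolp.funext => b.
by rewrite /Defs.shift; case: ifP; rewrite ?mul1r ?mul0r ?addr0.
Qed.

Lemma grad_surrogate (d : S -> R) (Q th : S -> A -> R) (s : S) (a : A) :
  grad (surrogate d Q) th s a
  = d s * softmax th s a * (Q s a - state_value (softmax th) Q s).
Proof.
pose w s1 b : R := ((s1 == s) && (b == a))%:R.
rewrite /grad derive1E.
have -> : (fun h => surrogate d Q (Defs.shift th s a h))
          = (fun h => surrogate d Q (fun s1 b => th s1 b + w s1 b * h)).
  by apply: boolp.funext => h; rewrite shiftE.
have D : is_derive (0 : R) 1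
    (fun h => surrogate d Q (fun s1 b => th s1 b + w s1 b * h)) _ :=
  @is_derive_sumT S _ _ _ (fun s1 =>
    is_deriveZ (d s1) (is_derive_state_value_softmax a th w Q s1)).
case: D => _ ->.
rewrite (bigD1 s) //= [X in _ + X]big1 ?addr0 => [|s1 /negPf s1Ns]; last first.
  by rewrite big1 ?scaler0 // => b _; rewrite /w s1Ns mulr0 mul0r.
rewrite (bigD1 a) //= [X in _ + X]big1 ?addr0 => [|b /negPf bNa]; last first.
  by rewrite /w bNa andbF mulr0 mul0r.
by rewrite /w !eqxx mulr1 /GRing.scale /= mulrA.
Qed.

End SoftmaxGradient.

Section SoftmaxAscent.
Context {R : realType} {S A : finType}.

Lemma expR_sub1_ge (y x : R) :
  0 <= y * x -> -1/5 <= y -> 4/5 * (y * x) <= (expR y - 1) * x.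
Proof.
move=> yx_ge0 y_ge.
case: (ltgtP y 0) => [y_lt0|y_gt0|->]; last by rewrite expR0 subrr !mul0r mulr0.
  have x_le0 : x <= 0 by rewrite -(nmulr_rge0 x y_lt0).
  have ey_ge : 4/5 <= expR y by have := expR_ge1Dx y; lra.
  have ey_le : expR y * (1 - y) <= 1.
    have := expR_ge1Dx (- y); have := expRxMexpNx_1 y; have := expR_gt0 y; nra.
  nra.
have x_ge0 : 0 <= x by rewrite -(pmulr_rge0 x y_gt0).
by have := expR_ge1Dx y; nra.
Qed.

Lemma softmax_reweight (th th' : S -> A -> R) (y : A -> R) (s : S) (b : A) :
  (forall c, th' s c = th s c + y c) ->
  softmax th' s b
  = softmax th s b * expR (y b) / \sum_c softmax th s c * expR (y c).
Proof.
move=> th'E; rewrite /softmax.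
set Z := \sum_c expR (th s c); set Z' := \sum_c expR (th' s c).
have Z_gt0 : 0 < Z := sum_expR_gt0 b (th s).
have Z'_gt0 : 0 < Z' := sum_expR_gt0 b (th' s).
have -> : \sum_c expR (th s c) / Z * expR (y c) = Z' / Z.
  by rewrite mulr_suml; apply: eq_bigr => c _; rewrite th'E expRD mulrAC.
by rewrite th'E expRD; field; rewrite !lt0r_neq0.
Qed.

Lemma mean_reweight_ge { p x y : A -> R } (a : A) :
  (forall b, 0 <= p b) -> \sum_b p b = 1 -> \sum_b p b * x b = 0 ->
  (forall b, 0 <= y b * x b) -> (forall b, -1/5 <= y b <= 1) ->
  4/5 / expR 1 * (p a * (y a * x a))
  <= (\sum_b p b * expR (y b) * x b) / \sum_b p b * expR (y b).
Proof.
move=> p_ge0 p_sum1 px0 yx_ge0 y_bnd.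
set Z := \sum_b p b * expR (y b).
set N := \sum_b p b * expR (y b) * x b.
have N_ge : 4/5 * (p a * (y a * x a)) <= N.
  have -> : N = \sum_b p b * ((expR (y b) - 1) * x b).
    rewrite -[N]subr0 -{1}px0 /N -sumrB; apply: eq_bigr => b _; ring.
  have term b : 4/5 * (p b * (y b * x b)) <= p b * ((expR (y b) - 1) * x b).
    rewrite mulrCA; apply: ler_wpM2l => //.
    by apply: expR_sub1_ge => //; case/andP: (y_bnd b).
  rewrite (bigD1 a) //=; apply: ler_wpDr; last exact: term.
  apply: sumr_ge0 => b _; apply: le_trans (term b).
  by apply: mulr_ge0 => //; apply: mulr_ge0.
have Z_gt0 : 0 < Z.
  have : \sum_b p b * (4/5) <= Z.
    apply: ler_sum => b _; apply: ler_wpM2l => //.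
    by case/andP: (y_bnd b) => yb_ge _; have := expR_ge1Dx (y b); lra.
  rewrite -mulr_suml p_sum1 mul1r; lra.
have Z_le : Z <= expR 1.
  have : Z <= \sum_b p b * expR 1.
    apply: ler_sum => b _; apply: ler_wpM2l => //.
    by rewrite ler_expR; case/andP: (y_bnd b).
  by rewrite -mulr_suml p_sum1 mul1r.
have N_ge0 : 0 <= N.
  by apply: le_trans N_ge; apply: mulr_ge0 => //; apply: mulr_ge0.
rewrite mulrAC; apply: le_trans (_ : N / expR 1 <= _).
  by apply: ler_wpM2r; rewrite ?invr_ge0 ?expR_ge0.
by apply: ler_wpM2l => //; rewrite lef_pV2 ?posrE ?expR_gt0.
Qed.

Lemma softmax_ascent (th th' Q : S -> A -> R) (s : S) (c eta D : R) (a : A) :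
  0 <= c <= 1 -> 0 <= eta -> eta * D <= 1/5 -> (forall b, 0 <= Q s b <= D) ->
  (forall b, th' s b = th s b
     + eta * (c * softmax th s b * (Q s b - state_value (softmax th) Q s))) ->
  4/5 * eta / expR 1
    * (c * softmax th s a * (Q s a - state_value (softmax th) Q s)) ^+ 2
  <= state_value (softmax th') Q s - state_value (softmax th) Q s.
Proof.
move=> /andP[c_ge0 c_le1] eta_ge0 etaD QD th'E.
have [p_ge0 p_sum1] := softmax_stochastic a th.
have [p'_ge0 p'_sum1] := softmax_stochastic a th'.
set p := softmax th s; set V := state_value (softmax th) Q s.
pose x b := Q s b - V.
pose y b := eta * (c * p b * x b).
have V_bnd : 0 <= V <= D := state_value_bounds (softmax_stochastic a th) QD.
have p_le1 b : p b <= 1.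
  by rewrite -(p_sum1 s) (bigD1 b) //= lerDl; apply: sumr_ge0.
have x_bnd b : `|x b| <= D.
  by rewrite ler_norml; case/andP: (QD b); case/andP: V_bnd; rewrite /x; lra.
have yx_ge0 b : 0 <= y b * x b.
  rewrite /y -!mulrA; apply: mulr_ge0 => //; apply: mulr_ge0 => //.
  by rewrite mulrA; apply: mulr_ge0; [exact: p_ge0 | rewrite -expr2 sqr_ge0].
have y_bnd b : -1/5 <= y b <= 1.
  have cp_ge0 : 0 <= c * p b by apply: mulr_ge0 => //; exact: p_ge0.
  have cpx : `|c * p b * x b| <= D.
    rewrite normrM ger0_norm // -(mul1r D).
    apply: ler_pM; rewrite ?normr_ge0 //; apply: mulr_ile1 => //; exact: p_ge0.
  have : `|y b| <= 1/5.
    by rewrite normrM ger0_norm //; apply: le_trans etaD; apply: ler_wpM2l.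
  by rewrite ler_norml; lra.
have px0 : \sum_b p b * x b = 0.
  rewrite /x; under eq_bigr do rewrite mulrBr.
  by rewrite sumrB -mulr_suml p_sum1 mul1r subrr.
have gain : state_value (softmax th') Q s - V
    = (\sum_b p b * expR (y b) * x b) / \sum_b p b * expR (y b).
  rewrite -[V]mul1r -(p'_sum1 s) [_ * V]mulr_suml /state_value -sumrB mulr_suml.
  apply: eq_bigr => b _.
  by rewrite -mulrBr (softmax_reweight th th' y s b th'E) mulrAC.
rewrite gain.
apply: le_trans _ (mean_reweight_ge a (p_ge0 s) (p_sum1 s) px0 yx_ge0 y_bnd).
rewrite -subr_ge0 /y /x -/V; set P := p a; set X := Q s a - V.
have -> : 4/5 / expR 1 * (P * (eta * (c * P * X) * X))
          - 4/5 * eta / expR 1 * (c * P * X) ^+ 2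
          = 4/5 * eta / expR 1 * (c * (1 - c)) * (P * X) ^+ 2 by ring.
apply: mulr_ge0; last exact: sqr_ge0.
by apply: mulr_ge0; [rewrite divr_ge0 ?expR_ge0 //; lra | rewrite mulr_ge0 // subr_ge0].
Qed.

End SoftmaxAscent.

Section CoherentRisk.
Context {R : realType} {dO : measure_display} {Omega : measurableType dO}
        {Pr : probability Omega R}.

Lemma Linf_cst (c : R) : Linf Pr (fun _ => c).
Proof. by split; [exact: measurable_cst | exists `|c|; exact: nearW]. Qed.

Lemma measurable_fun_fin { S : finType } { X : Omega -> S } (F : S -> R) :
  (forall x, measurable (X @^-1` [set x])) -> measurable_fun setT (fun w => F (X w)).
Proof.
move=> mX.
have -> : (fun w => F (X w)) = (fun w => \sum_x F x * \1_(X @^-1` [set x]) w).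
  apply: boolp.funext => w; rewrite (bigD1 (X w)) //= big1 ?addr0.
    by rewrite indicE mem_set // mulr1.
  by move=> x xNXw; rewrite indicE memNset ?mulr0 // => /= Xw; rewrite Xw eqxx in xNXw.
apply: measurable_sum => x.
exact (measurable_realfun.measurable_funM (measurable_cst (F x))
          (measurable_realfun.measurable_indic (mX x))).
Qed.

Lemma LinfD_fin { S : finType } { Y : Omega -> R } { X : Omega -> S } (F : S -> R) :
  Linf Pr Y -> (forall x, measurable (X @^-1` [set x])) ->
  Linf Pr (fun w => Y w + F (X w)).
Proof.
move=> [mY [M YM]] mX; split.
  exact (measurable_realfun.measurable_funD mY (measurable_fun_fin F mX)).
exists (M + \sum_x `|F x|); apply: filterS YM => w Yw.
rewrite (le_trans (ler_normD _ _)) // lerD // (bigD1 (X w)) //= lerDl.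
by apply: sumr_ge0 => x _.
Qed.

Lemma measureD_null { E N : set Omega } :
  measurable E -> measurable N -> Pr N = 0%E -> Pr (E `\` N) = Pr E.
Proof.
move=> mE mN N0; rewrite [RHS](measureDI Pr mE mN).
by rewrite (subset_measure0 (measurableI _ _ mE mN) mN (@subIsetr _ E N)) // adde0.
Qed.

Context {rho : (Omega -> R) -> R}.
Hypothesis hrho : coherent Pr rho.

Lemma rho_cst (c : R) : rho (fun _ => c) = c.
Proof.
case: hrho => _ _ rhoD rhoZ.
have rho0 : rho (fun _ => 0) = 0.
  by have := rhoZ (fun _ => 0) 0 (Linf_cst 0) (lexx 0); rewrite !mul0r.
by have := rhoD (fun _ => 0) c (Linf_cst 0); rewrite rho0 !add0r.
Qed.

Hypothesis hlaw : law_invariant Pr rho.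

Lemma law_invariant_ae_eq (X Y : Omega -> R) : Linf Pr X -> Linf Pr Y ->
  {ae Pr, forall w, X w = Y w} -> rho X = rho Y.
Proof.
move=> LX LY [N [mN N0 XYN]]; apply: hlaw => // B mB.
have [[mX _] [mY _]] := (LX, LY).
have mXB : measurable (X @^-1` B) by rewrite -[X @^-1` B]setTI; exact: mX.
have mYB : measurable (Y @^-1` B) by rewrite -[Y @^-1` B]setTI; exact: mY.
rewrite -(measureD_null mXB mN N0) -(measureD_null mYB mN N0).
congr (Pr _); apply/seteqP; split=> w [Bw Nw];
  have XYw : X w = Y w by apply: contra_notP Nw => /XYN.
- by split=> //=; rewrite -XYw.
- by split=> //=; rewrite XYw.
Qed.

Lemma rho_ae_bounds { X : Omega -> R } { m M : R } :
  m <= M -> measurable_fun setT X -> {ae Pr, forall w, m <= X w <= M} ->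
  m <= rho X <= M.
Proof.
move=> mM mX XmM.
pose Y w := Num.max m (Num.min (X w) M).
have Y_bnd w : m <= Y w <= M.
  by rewrite /Y le_max lexx ge_max mM ge_min lexx orbT.
have norm_bnd (Z : Omega -> R) w : m <= Z w <= M -> `|Z w| <= `|m| + `|M|.
  move=> /andP[mZ ZM]; rewrite ler_norml.
  have := ler_norm (- m); have := ler_norm M; rewrite normrN.
  by have := normr_ge0 m; have := normr_ge0 M => *; apply/andP; split; lra.
have LX : Linf Pr X.
  by split=> //; exists (`|m| + `|M|); apply: filterS XmM => w; exact: norm_bnd.
have LY : Linf Pr Y.
  split; first exact (measurable_realfun.measurable_maxr (measurable_cst m)
                         (measurable_realfun.measurable_minr mX (measurable_cst M))).
  by exists (`|m| + `|M|); apply: nearW => w; exact: norm_bnd.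
rewrite (@law_invariant_ae_eq X Y) //; last first.
  apply: filterS XmM => w /andP[mXw XwM].
  by rewrite /Y (min_l XwM) (max_r mXw).
have [_ rho_mono _ _] := hrho.
rewrite -{1}(rho_cst m) -(rho_cst M); apply/andP; split.
- by apply: rho_mono (Linf_cst m) LY _ => w; case/andP: (Y_bnd w).
- by apply: rho_mono LY (Linf_cst M) _ => w; case/andP: (Y_bnd w).
Qed.

End CoherentRisk.

Section Bellman.
Context {R : realType} {dO : measure_display} {Omega : measurableType dO}
        {Pr : probability Omega R} {S A : finType} {gamma : R}
        {r : S -> A -> Omega -> R} {s' : S -> A -> Omega -> S}
        {rho : (Omega -> R) -> R}.
Hypothesis hgamma : 0 <= gamma < 1.
Hypothesis hr_meas : forall s a, measurable_fun setT (r s a).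
Hypothesis hs'_meas : forall s a x, measurable (s' s a @^-1` [set x]).
Hypothesis hr01 : forall s a, {ae Pr, forall w, 0 <= r s a w <= 1}.
Hypothesis hrho : coherent Pr rho.
Hypothesis hlaw : law_invariant Pr rho.

Local Notation T := (bellman rho gamma r s').

Lemma Linf_reward s a : Linf Pr (r s a).
Proof.
split; first exact: hr_meas.
by exists 1; apply: filterS (hr01 s a) => w /andP[r_ge0 r_le1]; rewrite ger0_norm.
Qed.

Lemma Linf_bellman_target (pi Q : S -> A -> R) s a (c : R) :
  Linf Pr (fun w => r s a w + c * state_value pi Q (s' s a w)).
Proof.
exact: LinfD_fin (fun y => c * state_value pi Q y) (Linf_reward s a) (hs'_meas s a).
Qed.

Lemma le_bellman (pi1 Q1 pi2 Q2 : S -> A -> R) s a :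
  (forall y, state_value pi1 Q1 y <= state_value pi2 Q2 y) ->
  T pi1 Q1 s a <= T pi2 Q2 s a.
Proof.
move=> le12; have [_ rho_mono _ _] := hrho.
apply: rho_mono; try exact: Linf_bellman_target.
move=> w; rewrite lerD2l ler_wpM2l //; first by case/andP: hgamma.
exact: le12.
Qed.

Lemma bellman_addQ (pi Q : S -> A -> R) (c : R) s a : stochastic pi ->
  T pi (fun s1 a1 => Q s1 a1 + c) s a = T pi Q s a + gamma * c.
Proof.
move=> [_ pi_sum1]; have [_ _ rhoD _] := hrho.
rewrite /bellman -rhoD; last exact: Linf_bellman_target.
congr rho; apply: boolp.funext => w.
rewrite -addrA -mulrDr; congr (_ + gamma * _).
rewrite /state_value -[X in _ + X]mul1r -(pi_sum1 (s' s a w)) mulr_suml -big_split.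
by apply: eq_bigr => b _; rewrite mulrDr.
Qed.

Lemma bellman_bounds { pi Q : S -> A -> R } { m M : R } s a : stochastic pi ->
  (forall s1 a1, m <= Q s1 a1 <= M) -> gamma * m <= T pi Q s a <= 1 + gamma * M.
Proof.
move=> pi_st QmM.
have [_ rho_mono rhoD _] := hrho.
have := rho_ae_bounds hrho hlaw ler01 (hr_meas s a) (hr01 s a) => /andP[r_ge0 r_le1].
have Lc c : Linf Pr (fun w => r s a w + c).
  exact: (LinfD_fin (fun _ => c) (Linf_reward s a) (hs'_meas s a)).
have [g_ge0 _] := andP hgamma.
have V_bnd y : m <= state_value pi Q y <= M := state_value_bounds pi_st (QmM y).
apply/andP; split.
  apply: le_trans (_ : rho (fun w => r s a w + gamma * m) <= _).
    by rewrite rhoD ?lerDr //; exact: Linf_reward.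
  apply: rho_mono => [||w]; [exact: Lc | exact: Linf_bellman_target |].
  by rewrite lerD2l ler_wpM2l //; case/andP: (V_bnd (s' s a w)).
apply: le_trans (_ : rho (fun w => r s a w + gamma * M) <= _).
  apply: rho_mono => [||w]; [exact: Linf_bellman_target | exact: Lc |].
  by rewrite lerD2l ler_wpM2l //; case/andP: (V_bnd (s' s a w)).
by rewrite rhoD ?lerD2r //; exact: Linf_reward.
Qed.

Lemma bellman_fixpoint_bounds { pi Q : S -> A -> R } : stochastic pi ->
  (forall s a, Q s a = T pi Q s a) -> forall s a, 0 <= Q s a <= (1 - gamma)^-1.
Proof.
move=> pi_st Qfix s a.
have [iM _ QM] := @arg_maxP _ R _ (s, a) xpredT (fun i => Q i.1 i.2) isT.
have [im _ Qm] := @arg_minP _ R _ (s, a) xpredT (fun i => Q i.1 i.2) isT.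
have Q_bnd s1 a1 : Q im.1 im.2 <= Q s1 a1 <= Q iM.1 iM.2.
  by apply/andP; split; [exact: (Qm (s1, a1)) | exact: (QM (s1, a1))].
have /andP[_ QM_le] := bellman_bounds iM.1 iM.2 pi_st Q_bnd.
have /andP[Qm_ge _] := bellman_bounds im.1 im.2 pi_st Q_bnd.
rewrite -Qfix in QM_le; rewrite -Qfix in Qm_ge.
have [g_ge0 g_lt1] := andP hgamma.
have /andP[Qsa_ge Qsa_le] := Q_bnd s a.
apply/andP; split; first nra.
by rewrite -[_^-1]mul1r ler_pdivlMr ?subr_gt0 //; nra.
Qed.

Lemma bellman_policy_improvement { pi pi' Q Q' : S -> A -> R } : stochastic pi' ->
  (forall s a, Q s a = T pi Q s a) -> (forall s a, Q' s a = T pi' Q' s a) ->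
  (forall s, state_value pi Q s <= state_value pi' Q s) ->
  forall s a, Q s a <= Q' s a.
Proof.
move=> pi'_st Qfix Q'fix improve s a.
have [i _ del_min] :=
  @arg_minP _ R _ (s, a) xpredT (fun i => Q' i.1 i.2 - Q i.1 i.2) isT.
set del := Q' i.1 i.2 - Q i.1 i.2 in del_min.
have step s1 a1 : Q s1 a1 + gamma * del <= Q' s1 a1.
  apply: le_trans (_ : T pi' Q s1 a1 + gamma * del <= _).
    by rewrite lerD2r (Qfix s1 a1); exact: le_bellman.
  rewrite -bellman_addQ // (Q'fix s1 a1); apply: le_bellman => y.
  apply: ler_sum => b _; apply: ler_wpM2l; first by case: pi'_st.
  by have /= := del_min (y, b) isT; rewrite lerBrDl addrC.
have [g_ge0 g_lt1] := andP hgamma.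
have del_ge0 : 0 <= del by have := step i.1 i.2; rewrite /del; nra.
by have /= := del_min (s, a) isT; rewrite lerBrDl; lra.
Qed.

Section PolicyGradient.
Context {d : S -> R} {Qpi : (S -> A -> R) -> S -> A -> R} {eta : R}.
Hypothesis hd : forall s, 0 <= d s <= 1.
Hypothesis hQ : forall th s a, Qpi th s a = T (softmax th) (Qpi th) s a.
Hypothesis heta : 0 <= eta <= (1 - gamma) / 5.

Local Notation g th := (grad (surrogate d (Qpi th)) th).

Let rate_ge0 : 0 <= 4/5 * eta / expR 1.
Proof. by case/andP: heta => eta_ge0 _; rewrite divr_ge0 ?expR_ge0 ?mulr_ge0. Qed.

Lemma Qpi_bounds (th : S -> A -> R) s a : 0 <= Qpi th s a <= (1 - gamma)^-1.
Proof. exact: bellman_fixpoint_bounds (softmax_stochastic a th) (hQ th) s a. Qed.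

Lemma surrogate_Qpi_le (a0 : A) (hd1 : \sum_s d s = 1) (th : S -> A -> R) :
  surrogate d (Qpi th) th <= (1 - gamma)^-1.
Proof.
rewrite /surrogate -[leRHS]mul1r -{1}hd1 mulr_suml; apply: ler_sum => s _.
apply: ler_wpM2l; first by case/andP: (hd s).
by case/andP: (state_value_bounds (softmax_stochastic a0 th) (Qpi_bounds th s)).
Qed.

Context {th th' : S -> A -> R}.
Hypothesis hstep : forall s a, th' s a = th s a + eta * g th s a.

Lemma state_value_step_gain s a :
  4/5 * eta / expR 1 * g th s a ^+ 2
  <= state_value (softmax th') (Qpi th) s - state_value (softmax th) (Qpi th) s.
Proof.
have [eta_ge0 eta_le] := andP heta; have [g_ge0 g_lt1] := andP hgamma.
rewrite grad_surrogate; apply: softmax_ascent (Qpi_bounds th s) _ => //.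
- by rewrite ler_pdivrMr ?subr_gt0 //; lra.
- by move=> b; rewrite hstep grad_surrogate.
Qed.

Lemma Qpi_step_mono s a : Qpi th s a <= Qpi th' s a.
Proof.
apply: (bellman_policy_improvement (softmax_stochastic a th') (hQ th) (hQ th')) => s1.
rewrite -subr_ge0; apply: le_trans (state_value_step_gain s1 a).
by rewrite mulr_ge0 ?sqr_ge0.
Qed.

Lemma surrogate_step_gain s a :
  d s * (4/5 * eta / expR 1) * g th s a ^+ 2
  <= surrogate d (Qpi th') th' - surrogate d (Qpi th) th.
Proof.
pose V th1 th2 s1 := state_value (softmax th1) (Qpi th2) s1.
have gain s1 : 4/5 * eta / expR 1 * g th s1 a ^+ 2 <= V th' th' s1 - V th th s1.
  apply: le_trans (state_value_step_gain s1 a) _; rewrite lerD2r.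
  apply: ler_sum => b _; apply: ler_wpM2l; last exact: Qpi_step_mono.
  by case: (softmax_stochastic a th').
have d_ge0 s1 : 0 <= d s1 by case/andP: (hd s1).
have -> : surrogate d (Qpi th') th' - surrogate d (Qpi th) th
          = \sum_s1 d s1 * (V th' th' s1 - V th th s1).
  by rewrite /surrogate -sumrB; apply: eq_bigr => s1 _; rewrite mulrBr.
rewrite (bigD1 s) //= -mulrA -[leLHS]addr0 lerD ?ler_wpM2l //.
apply: sumr_ge0 => s1 _; rewrite mulr_ge0 //; apply: le_trans (gain s1).
by rewrite mulr_ge0 ?sqr_ge0.
Qed.

End PolicyGradient.

End Bellman.

Lemma cvg0_of_sq_le_increments {R : realType} (J u : nat -> R) (k : R) : 0 < k ->
  (forall n, k * u n ^+ 2 <= J n.+1 - J n) -> has_ubound (range J) ->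
  u @ \oo --> 0.
Proof.
move=> k_gt0 incr J_ub.
have J_nd : nondecreasing_seq J.
  apply/nondecreasing_seqP => n; rewrite -subr_ge0; apply: le_trans (incr n).
  by rewrite mulr_ge0 ?sqr_ge0 ?ltW.
have J_cvg := nondecreasing_is_cvgn J_nd J_ub.
have dJ0 : (fun n => J n.+1 - J n) @ \oo --> 0.
  have JS_cvg : (fun n => J n.+1) @ \oo --> limn J.
    by move: J_cvg; rewrite -(cvg_shiftS J).
  by rewrite -(subrr (limn J)); exact: cvgB.
apply/cvgrPdist_lt => e e_gt0.
have ke_gt0 : 0 < k * e ^+ 2 by rewrite mulr_gt0 ?exprn_gt0.
move/cvgrPdist_lt: dJ0 => /(_ _ ke_gt0); apply: filterS => n.
rewrite !sub0r !normrN => dJn.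
have : k * u n ^+ 2 < k * e ^+ 2.
  exact: le_lt_trans (incr n) (le_lt_trans (ler_norm _) dJn).
rewrite ltr_pM2l // => u2_lt; rewrite ltr_norml; apply/andP; split; nra.
Qed.

Theorem lemma5 (R : realType) (dO : measure_display) (Omega : measurableType dO)
  (Pr : probability Omega R) (S A : finType)
  (gamma : R) (hgamma : 0 < gamma < 1)
  (r : S -> A -> Omega -> R) (s' : S -> A -> Omega -> S)
  (hr_meas : forall s a, measurable_fun setT (r s a))
  (hs'_meas : forall s a x, measurable (s' s a @^-1` [set x]))
  (hr01 : forall s a, {ae Pr, forall w, 0 <= r s a w <= 1})
  (hdens : forall s a, exists M : R, forall x : S, exists f : R -> R,
      measurable_fun setT f /\ (forall u, 0 <= f u <= M) /\
      forall B : set R, measurable B ->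
        Pr (r s a @^-1` B `&` s' s a @^-1` [set x])
        = (\int[lebesgue_measure]_(u in B) (f u)%:E)%E)
  (rho : (Omega -> R) -> R) (hrho : coherent Pr rho) (hlaw : law_invariant Pr rho)
  (d : S -> R) (hd : forall s, 0 < d s <= 1) (hd1 : \sum_(s : S) d s = 1)
  (Qpi : (S -> A -> R) -> S -> A -> R)
  (hQ : forall theta s a,
      Qpi theta s a = bellman rho gamma r s' (softmax theta) (Qpi theta) s a)
  (eta : R) (heta : 0 < eta <= (1 - gamma) / 5)
  (theta : nat -> S -> A -> R)
  (hiter : forall t s a, theta t.+1 s a =
      theta t s a + eta * grad (surrogate d (Qpi (theta t))) (theta t) s a) :
  forall s a,
    (fun t => grad (surrogate d (Qpi (theta t))) (theta t) s a) @ \oo --> 0.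
Proof.
move=> s a.
have [g_gt0 g_lt1] := andP hgamma; have [eta_gt0 eta_le] := andP heta.
have hgamma' : 0 <= gamma < 1 by rewrite ltW.
have heta' : 0 <= eta <= (1 - gamma) / 5 by rewrite ltW.
have hd' s1 : 0 <= d s1 <= 1 by case/andP: (hd s1) => /ltW ->.
apply: (@cvg0_of_sq_le_increments _ (fun t => surrogate d (Qpi (theta t)) (theta t))
          _ (d s * (4/5 * eta / expR 1))).
- by case/andP: (hd s) => ds_gt0 _; rewrite !mulr_gt0 ?invr_gt0 ?expR_gt0.
- move=> t; exact: (surrogate_step_gain hgamma' hr_meas hs'_meas hr01 hrho hlaw
                      hd' hQ heta' (hiter t)).
- exists (1 - gamma)^-1 => _ [t _ <-].
  exact: (surrogate_Qpi_le hgamma' hr_meas hs'_meas hr01 hrho hlaw hd' hQ a hd1).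
Qed.
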